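(* Let $Q$ be a quantity space over a field $K$ with a basis $E=\{e_1,\ldots,e_n\}$. Then: (1) $\mu_E(xy)=\mu_E(x)\mu_E(y)$ for all $x,y\in Q$; (2) for all $x\in Q$ with $\mu_E(x)\neq0$, $x^{-1}$ exists and $\mu_E(x^{-1})=\mu_E(x)^{-1}$; (3) $\mu_E(\lambda\cdot x)=\lambda\,\mu_E(x)$ for all $\lambda\in K$, $x\in Q$; (4) $\mu_E(x+y)=\mu_E(x)+\mu_E(y)$ for all $x,y\in Q$ with $x\sim y$.
   Context: A scalable monoid over a (unital, associative) ring $R$ is a monoid $X$ (identity $1_X$, product written $xy$) together with a map $R\times X\to X$, $(\alpha,x)\mapsto\alpha\cdot x$, such that $1\cdot x=x$, $\alpha\cdot(\beta\cdot x)=\alpha\beta\cdot x$ and $\alpha\cdot(xy)=(\alpha\cdot x)y=x(\alpha\cdot y)$. A quantity space over a field $K$ is a commutative scalable monoid $Q$ over $K$ for which there exists a basis, i.e. a finite set $\{e_1,\ldots,e_n\}$ of invertible elements of $Q$ such that every $x\in Q$ has a unique expansion $x=\mu\cdot\prod_{i=1}^n e_i^{k_i}$ with $\mu\in K$ and $k_i\in\mathbb{Z}$; the scalar $\mu$ in this expansion is the measure $\mu_E(x)$ of $x$ relative to $E$. On $Q$, $x\sim y$ iff $\alpha\cdot x=\beta\cdot y$ for some $\alpha,\beta\in K$. A unit element for a class $\mathsf{C}$ of $\sim$ is some $u\in\mathsf{C}$ such that every $x\in\mathsf{C}$ equals $\lambda\cdot u$ for some $\lambda\in K$ and $\lambda\cdot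 u=\lambda'\cdot u$ implies $\lambda=\lambda'$. For $x\sim y$, with $u$ a unit element for their class, $x=\rho\cdot u$, $y=\sigma\cdot u$, the sum is $x+y:=(\rho+\sigma)\cdot u$ (independent of $u$). *)

From mathcomp Require Import all_boot all_order all_algebra.
From Stdlib Require Import ClassicalEpsilon.
Set Implicit Arguments. Unset Strict Implicit. Unset Printing Implicit Defensive.
Import GRing.Theory.
Local Open Scope ring_scope.

Section QS.
Variables (K : fieldType) (Q : Type) (mul : Q -> Q -> Q) (one : Q)
          (sc : K -> Q -> Q).

Definition comm_scalable_monoid : Prop :=
  (forall x y z, mul x (mul y z) = mul (mul x y) z) /\
  (forall x, mul one x = x) /\ (forall x, mul x one = x) /\
  (forall x y, mul x y = mul y x) /\
  (forall x, sc 1 x = x) /\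
  (forall a b x, sc a (sc b x) = sc (a * b) x) /\
  (forall a x y, sc a (mul x y) = mul (sc a x) y) /\
  (forall a x y, sc a (mul x y) = mul x (sc a y)).

Definition invertible (x : Q) : Prop := exists y, mul x y = one /\ mul y x = one.

Definition qinv (x : Q) : Q :=
  epsilon (inhabits one) (fun y => mul x y = one /\ mul y x = one).

Definition npow (x : Q) (m : nat) : Q := iter m (mul x) one.

Definition zpow (x : Q) (k : int) : Q :=
  match k with Posz m => npow x m | Negz m => npow (qinv x) m.+1 end.

Variables (n : nat) (e : 'I_n -> Q).

Definition monomial (k : 'I_n -> int) : Q :=
  foldr (fun i acc => mul (zpow (e i) (k i)) acc) one (enum 'I_n).

Definition is_basis : Prop :=
  (forall i, invertible (e i)) /\
  (forall x, exists mu k, x = sc mu (monomial k)) /\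
  (forall mu mu' k k', sc mu (monomial k) = sc mu' (monomial k') ->
      mu = mu' /\ k =1 k').

Definition measure (x : Q) : K :=
  epsilon (inhabits 0) (fun mu => exists k, x = sc mu (monomial k)).

End QS.

Section Sum.
Variables (K : fieldType) (Q : Type) (sc : K -> Q -> Q) (dflt : Q).

Definition qsim (x y : Q) : Prop := exists a b, sc a x = sc b y.

Definition is_unit_for (x u : Q) : Prop :=
  qsim u x /\ (forall z, qsim z x -> exists l, z = sc l u) /\
  (forall l l', sc l u = sc l' u -> l = l').

Definition coord (u z : Q) : K := epsilon (inhabits 0) (fun l => z = sc l u).

Definition qadd (x y : Q) : Q :=
  let u := epsilon (inhabits x) (is_unit_for x) in
  sc (coord u x + coord u y) u.
End Sum.

From mathcomp Require Import all_boot all_order all_algebra zify.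
From Stdlib Require Import ClassicalEpsilon.
Set Implicit Arguments. Unset Strict Implicit. Unset Printing Implicit Defensive.
Import GRing.Theory.
Local Open Scope ring_scope.

(* Every quantity is x = mu . m_k with m_k = prod_i e_i ^ k_i, and exponents
   add under multiplication, so products, scalings and inverses act on the
   scalar mu alone (the inverse of mu . m_k being mu^-1 . m_(-k)).  Moreover
   m_k is itself a unit element of the class of x, and the measure is
   K-homogeneous, which makes it additive on sums of comparable quantities. *)

Section Addition.
Variables (K : fieldType) (Q : Type) (sc : K -> Q -> Q).

Lemma coordP u z : (exists l, z = sc l u) -> z = sc (coord sc u z) u.
Proof. exact: epsilon_spec. Qed.

Lemma qadd_homogeneous (f : Q -> K) x y :
  (forall l z, f (sc l z) = l * f z) ->
  (exists u, is_unit_for sc x u) -> qsim sc x y ->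
  f (qadd sc x y) = f x + f y.
Proof.
move=> fZ unit_x [a [b sim_xy]].
have [_ [scale_u _]] := epsilon_spec (inhabits x) _ unit_x.
set u := epsilon _ _ in scale_u *.
have x_u : x = sc (coord sc u x) u by apply/coordP/scale_u; exists 1, 1.
have y_u : y = sc (coord sc u y) u by apply/coordP/scale_u; exists b, a.
by rewrite /qadd -/u fZ mulrDl -!fZ -x_u -y_u.
Qed.

End Addition.

Section ScalableMonoid.
Variables (K : fieldType) (Q : Type) (mul : Q -> Q -> Q) (one : Q)
          (sc : K -> Q -> Q).
Hypothesis HQ : comm_scalable_monoid mul one sc.

Let mulqA : associative mul. Proof. by case: HQ. Qed.
Let mul1q : left_id one mul. Proof. by case: HQ => _ []. Qed.
Let mulq1 : right_id one mul. Proof. by case: HQ => _ [_ []]. Qed.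
Let mulqC : commutative mul. Proof. by case: HQ => _ [_ [_ []]]. Qed.
Let scale1q x : sc 1 x = x. Proof. by case: HQ => _ [_ [_ [_ []]]]. Qed.
Let scaleqA a b x : sc a (sc b x) = sc (a * b) x.
Proof. by case: HQ => _ [_ [_ [_ [_ []]]]]. Qed.
Let scaleqMl a x y : sc a (mul x y) = mul (sc a x) y.
Proof. by case: HQ => _ [_ [_ [_ [_ [_ []]]]]]. Qed.
Let scaleqMr a x y : sc a (mul x y) = mul x (sc a y).
Proof. by case: HQ => _ [_ [_ [_ [_ [_ []]]]]]. Qed.

Lemma mul_scale a b x y : mul (sc a x) (sc b y) = sc (a * b) (mul x y).
Proof. by rewrite -scaleqMl -scaleqMr scaleqA. Qed.

Lemma qinvP x : invertible mul one x ->
  mul x (qinv mul one x) = one /\ mul (qinv mul one x) x = one.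
Proof. exact: epsilon_spec. Qed.

Section IntegerPowers.
Variables (x : Q) (x_invertible : invertible mul one x).

Lemma zpow1D k : zpow mul one x (1 + k) = mul x (zpow mul one x k).
Proof.
have [xV _] := qinvP x_invertible.
case: k => [m|[|m]]; first by rewrite -intS.
  by rewrite /= /npow /= mulq1 xV.
have -> : 1 + Negz m.+1 = Negz m by lia.
by rewrite /= /npow /= mulqA xV mul1q.
Qed.

Lemma zpowN1D k : zpow mul one x (-1 + k) = mul (qinv mul one x) (zpow mul one x k).
Proof.
have [_ Vx] := qinvP x_invertible.
by rewrite -{2}[k](addNKr 1) zpow1D mulqA Vx mul1q.
Qed.

Lemma zpowD a b :
  zpow mul one x (a + b) = mul (zpow mul one x a) (zpow mul one x b).
Proof.
elim/int_rec: a => [|m IH|m IH]; first by rewrite add0r mul1q.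
  by rewrite intS -addrA !zpow1D IH mulqA.
by rewrite intS opprD -addrA !zpowN1D IH mulqA.
Qed.

End IntegerPowers.

Lemma mul_foldr (I : Type) (f g : I -> Q) (s : seq I) :
  mul (foldr (fun i acc => mul (f i) acc) one s)
      (foldr (fun i acc => mul (g i) acc) one s)
  = foldr (fun i acc => mul (mul (f i) (g i)) acc) one s.
Proof.
elim: s => [|i s IH] /=; first by rewrite mul1q.
by rewrite -IH -!mulqA; congr (mul (f i)); rewrite mulqA [mul _ (g i)]mulqC -mulqA.
Qed.

Section Monomials.
Variables (n : nat) (e : 'I_n -> Q).
Hypothesis e_invertible : forall i, invertible mul one (e i).

Lemma eq_monomial k k' : k =1 k' -> monomial mul one e k = monomial mul one e k'.
Proof. by move=> eq_k; rewrite /monomial; elim: (enum 'I_n) => //= i s ->; rewrite eq_k. Qed.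

Lemma monomial0 : monomial mul one e (fun=> 0) = one.
Proof. by rewrite /monomial; elim: (enum 'I_n) => //= i s ->; rewrite mul1q. Qed.

Lemma monomialD k k' :
  mul (monomial mul one e k) (monomial mul one e k')
  = monomial mul one e (fun i => k i + k' i).
Proof.
rewrite /monomial mul_foldr.
by elim: (enum 'I_n) => //= i s ->; rewrite zpowD.
Qed.

End Monomials.

Section Measure.
Variables (n : nat) (e : 'I_n -> Q).
Hypothesis HE : is_basis mul one sc e.

Local Notation mon := (monomial mul one e).
Local Notation meas := (measure mul one sc e).

Let e_invertible i : invertible mul one (e i). Proof. by case: HE. Qed.
Let expansion x : exists mu k, x = sc mu (mon k). Proof. by case: HE => _ []. Qed.
Let expansion_uniq mu mu' k k' :
  sc mu (mon k) = sc mu' (mon k') -> mu = mu' /\ k =1 k'.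
Proof. by case: HE => _ [_]; apply. Qed.

Lemma measureE mu k : meas (sc mu (mon k)) = mu.
Proof.
have : exists mu', exists k', sc mu (mon k) = sc mu' (mon k') by exists mu, k.
by move/(epsilon_spec (inhabits 0)) => [k' /esym/expansion_uniq[]].
Qed.

Lemma measureM x y : meas (mul x y) = meas x * meas y.
Proof.
have [a [k ->]] := expansion x; have [b [k' ->]] := expansion y.
by rewrite mul_scale monomialD // !measureE.
Qed.

Lemma measureZ l x : meas (sc l x) = l * meas x.
Proof. by have [a [k ->]] := expansion x; rewrite scaleqA !measureE. Qed.

Lemma measure_neq0_inverse x : meas x != 0 ->
  exists y, [/\ mul x y = one, mul y x = one & meas y = (meas x)^-1].
Proof.
have [a [k ->]] := expansion x; rewrite measureE => a_neq0.
have xy : mul (sc a (mon k)) (sc a^-1 (mon (fun i => - k i))) = one.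
  rewrite mul_scale monomialD // divff // scale1q -[RHS](monomial0 e).
  by apply: eq_monomial => i; rewrite subrr.
exists (sc a^-1 (mon (fun i => - k i))).
by split; [| rewrite mulqC | rewrite measureE].
Qed.

Lemma monomial_unit_for mu k : is_unit_for sc (sc mu (mon k)) (mon k).
Proof.
split; first by exists mu, 1; rewrite scale1q.
split=> [z [a [b sim_z]] | l l' /expansion_uniq[] //].
have [nu [k' z_exp]] := expansion z; exists nu.
move: sim_z; rewrite z_exp !scaleqA => /expansion_uniq[_ eq_k].
by rewrite (eq_monomial _ eq_k).
Qed.

Lemma measureD x y : qsim sc x y -> meas (qadd sc x y) = meas x + meas y.
Proof.
apply: qadd_homogeneous; first exact: measureZ.
have [mu [k ->]] := expansion x; exists (mon k); exact: monomial_unit_for.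
Qed.

End Measure.
End ScalableMonoid.

Theorem proposition3p14 (K : fieldType) (Q : Type) (mul : Q -> Q -> Q) (one : Q)
    (sc : K -> Q -> Q) (HQ : comm_scalable_monoid mul one sc)
    (n : nat) (e : 'I_n -> Q) (HE : is_basis mul one sc e) :
  [/\ (forall x y, measure mul one sc e (mul x y)
                   = measure mul one sc e x * measure mul one sc e y),
      (forall x, measure mul one sc e x != 0 ->
         exists y, mul x y = one /\ mul y x = one /\
                   measure mul one sc e y = (measure mul one sc e x)^-1),
      (forall (l : K) x, measure mul one sc e (sc l x) = l * measure mul one sc e x) &
      (forall x y, qsim sc x y ->
         measure mul one sc e (qadd sc x y)
         = measure mul one sc e x + measure mul one sc e y)].
Proof.
split; [exact: measureM | | exact: measureZ | exact: measureD].
by move=> x /(measure_neq0_inverse HQ HE)[y [? ? ?]]; exists y.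
Qed.
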